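(* Let $\mathcal{K}$ be a Fraïssé class in a relational language $L$ with Fraïssé limit $\mathbf{K}$, exhaustion $\mathbf{K}=\bigcup_n\mathbf{A}_n$, $G=\mathrm{Aut}(\mathbf{K})$ and $H_m=\mathrm{Emb}(\mathbf{A}_m,\mathbf{K})$. Let $\mathcal{K}^*$ be an expansion of $\mathcal{K}$ such that the pair $(\mathcal{K}^*,\mathcal{K})$ is excellent. Then a set $S\subseteq H_m$ is minimal if and only if there are $\mathbf{K}'\in X_{\mathcal{K}^*}$ and $E\subseteq\mathcal{K}^*(\mathbf{A}_m)$ such that $S=H_m(E,\mathbf{K}')$.
   Context: $L^*=L\cup\{S_i\}$ adds new relation symbols; a class $\mathcal{K}^*$ of finite $L^*$-structures closed under isomorphism is an expansion of $\mathcal{K}$ if $\{\mathbf{A}^*|_L:\mathbf{A}^*\in\mathcal{K}^*\}=\mathcal{K}$; $\mathcal{K}^*(\mathbf{A})$ is the set of expansions of $\mathbf{A}$ lying in $\mathcal{K}^*$. The pair is excellent if: $\mathcal{K}^*$ is a Fraïssé class; it is precompact ($\mathcal{K}^*(\mathbf{A})$ finite for each $\mathbf{A}\in\mathcal{K}$); reasonable (for $\mathbf{A},\mathbf{B}\in\mathcal{K}$, an embedding $f:\mathbf{A}\to\mathbf{B}$ and $\mathbf{A}^*\in\mathcal{K}^*(\mathbf{A})$ there is $\mathbf{B}^*\in\mathcal{K}^*(\mathbf{B})$ with $f:\mathbf{A}^*\to\mathbf{B}^*$ an embedding); has the expansion property (for each $\mathbf{A}^*\in\mathcal{K}^*$ there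 is $\mathbf{B}\in\mathcal{K}$ such that every $\mathbf{B}^*\in\mathcal{K}^*(\mathbf{B})$ embeds $\mathbf{A}^*$); and $\mathcal{K}^*$ has the Ramsey property (for $\mathbf{A}\leq\mathbf{B}$ in $\mathcal{K}^*$ and $r\geq2$ there is $\mathbf{C}\in\mathcal{K}^*$ with $\mathbf{B}\leq\mathbf{C}$ such that every $c:\mathrm{Emb}(\mathbf{A},\mathbf{C})\to r$ is constant on $h\circ\mathrm{Emb}(\mathbf{A},\mathbf{B})$ for some $h\in\mathrm{Emb}(\mathbf{B},\mathbf{C})$). $X_{\mathcal{K}^*}$ is the set of $L^*$-expansions $\mathbf{K}'=\langle\mathbf{K},\vec S\rangle$ of $\mathbf{K}$ all of whose finite substructures lie in $\mathcal{K}^*$, topologized by basic open sets $\{\mathbf{K}':\mathbf{A}^*\subseteq\mathbf{K}'\}$, with the right $G$-action $S^{\mathbf{K}'g}(x_1,\dots,x_k)\iff S^{\mathbf{K}'}(g(x_1),\dots,g(x_k))$. For $f\in H_m$, $\mathbf{K}'\cdot f$ is the unique expansion of $\mathbf{A}_m$ with $f\in\mathrm{Emb}(\mathbf{K}'\cdot f,\mathbf{K}')$, and $H_m(E,\mathbf{K}')=\{f\in H_m:\mathbf{K}'\cdot f\in E\}$. Identify subsets of $H_m$ with $2^{H_m}$, on which $G$ acts on the right by $(\chi\cdot g)(f)=\chi(g\circ f)$. $S\subseteq H_m$ is minimal if the orbit closure $\overline{\chi_S\cdot G}\subseteq 2^{H_m}$ is a minimal $G$-flow (every orbit dense). *)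

From Stdlib Require List.
From mathcomp Require Import all_boot.
Set Implicit Arguments. Unset Strict Implicit. Unset Printing Implicit Defensive.

Record struc (L : Type) (ar : L -> nat) (T : Type) := Struc {
  rel : forall s : L, (ar s).-tuple T -> bool }.
Arguments Struc {L ar T}.
Arguments rel {L ar T}.

Section Structures.
Variables (L : Type) (ar : L -> nat).

Definition emb (TA TB : Type) (A : struc ar TA) (B : struc ar TB) (f : TA -> TB) :=
  injective f /\ forall s (x : (ar s).-tuple TA), rel B s (map_tuple f x) = rel A s x.

Definition iso (TA TB : Type) (A : struc ar TA) (B : struc ar TB) (f : TA -> TB) :=
  bijective f /\ emb A B f.

Definition pullback (TA TB : Type) (B : struc ar TB) (f : TA -> TB) : struc ar TA :=
  Struc (fun s x => rel B s (map_tuple f x)).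

Definition induced (U : countType) (M : struc ar U) (s : seq U) : struc ar (seq_sub s) :=
  pullback M val.

Definition cls := forall T : finType, struc ar T -> Prop.

Definition iso_closed (K : cls) :=
  forall (TA TB : finType) (A : struc ar TA) (B : struc ar TB) f, iso A B f -> K TA A -> K TB B.

Definition hereditary (K : cls) :=
  forall (TA TB : finType) (A : struc ar TA) (B : struc ar TB) f, emb A B f -> K TB B -> K TA A.

Definition joint_embedding (K : cls) :=
  forall (TA TB : finType) (A : struc ar TA) (B : struc ar TB), K TA A -> K TB B ->
  exists (TC : finType) (C : struc ar TC) f g, [/\ K TC C, emb A C f & emb B C g].

Definition amalgamation (K : cls) :=
  forall (TA TB TC : finType) (A : struc ar TA) (B : struc ar TB) (C : struc ar TC) f g,
  K TA A -> K TB B -> K TC C -> emb A B f -> emb A C g ->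
  exists (TD : finType) (D : struc ar TD) f' g',
    [/\ K TD D, emb B D f', emb C D g' & forall x, f' (f x) = g' (g x)].

Definition countably_many_iso_types (K : cls) :=
  exists F : nat -> {T : finType & struc ar T},
  forall (T : finType) (A : struc ar T), K T A -> exists n f, iso A (projT2 (F n)) f.

Definition arbitrarily_large (K : cls) :=
  forall n, exists (T : finType) (A : struc ar T), K T A /\ n <= #|T|.

(* Fraisse class (convention of Kechris-Pestov-Todorcevic) *)
Definition fraisse_class (K : cls) :=
  [/\ iso_closed K, hereditary K, joint_embedding K, amalgamation K &
      countably_many_iso_types K /\ arbitrarily_large K].

Definition aut (U : Type) (M : struc ar U) (g : U -> U) := iso M M g.

Definition fraisse_limit (K : cls) (U : countType) (M : struc ar U) :=
  (forall (T : finType) (A : struc ar T), K T A <-> exists f, emb A M f) /\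
  (forall (T : finType) (A : struc ar T) f g, emb A M f -> emb A M g ->
     exists h, aut M h /\ forall x, h (f x) = g x).

Definition ramsey (K : cls) :=
  forall (TA TB : finType) (A : struc ar TA) (B : struc ar TB) (r : nat),
  K TA A -> K TB B -> (exists e, emb A B e) -> 2 <= r ->
  exists (TC : finType) (C : struc ar TC),
    [/\ K TC C, (exists e, emb B C e) &
        forall c : (TA -> TC) -> 'I_r, exists h, emb B C h /\
          forall f g, emb A B f -> emb A B g -> c (h \o f) = c (h \o g)].

End Structures.

Definition exhaustion (U : countType) (A : nat -> seq U) :=
  (forall n, {subset A n <= A n.+1}) /\ (forall x, exists n, x \in A n).

Section Expansions.
Variables (L L' : Type) (ar : L -> nat) (ar' : L' -> nat).

Definition sum_ar (s : L + L') : nat :=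
  match s with inl a => ar a | inr b => ar' b end.

Definition is_expansion (T : Type) (As : struc (sum_ar) T) (A : struc ar T) :=
  forall s (x : (ar s).-tuple T), rel As (inl s) x = rel A s x.

Definition Kstar (Ks : cls sum_ar) (T : finType) (A : struc ar T) (As : struc sum_ar T) :=
  Ks T As /\ is_expansion As A.

Definition expansion_of (K : cls ar) (Ks : cls sum_ar) :=
  iso_closed Ks /\
  forall (T : finType) (A : struc ar T), K T A <-> exists As, Kstar Ks A As.

Definition precompact (K : cls ar) (Ks : cls sum_ar) :=
  forall (T : finType) (A : struc ar T), K T A ->
  exists l : list (struc sum_ar T), forall As, Kstar Ks A As -> List.In As l.

Definition reasonable (K : cls ar) (Ks : cls sum_ar) :=
  forall (TA TB : finType) (A : struc ar TA) (B : struc ar TB) f As,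
  K TA A -> K TB B -> emb A B f -> Kstar Ks A As ->
  exists Bs, Kstar Ks B Bs /\ emb As Bs f.

Definition expansion_property (K : cls ar) (Ks : cls sum_ar) :=
  forall (TA : finType) (As : struc sum_ar TA), Ks TA As ->
  exists (TB : finType) (B : struc ar TB), K TB B /\
    forall Bs, Kstar Ks B Bs -> exists f, emb As Bs f.

Definition excellent (K : cls ar) (Ks : cls sum_ar) :=
  [/\ fraisse_class Ks, precompact K Ks, reasonable K Ks,
      expansion_property K Ks & ramsey Ks].

Definition X_Kstar (Ks : cls sum_ar) (U : countType) (M : struc ar U)
  (K' : struc sum_ar U) :=
  is_expansion K' M /\ forall s : seq U, Ks _ (induced K' s).

End Expansions.

Section Flow.
Variables (L : Type) (ar : L -> nat) (U : countType) (M : struc ar U) (s : seq U).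

Definition Hemb (f : seq_sub s -> U) := emb (induced M s) M f.

(* points of 2^H are represented by predicates on maps; only values on H matter.
   (chi . g)(f) = chi (g o f).  Topology: product topology, basic neighbourhoods
   of chi are given by finite subsets F of H. *)
Definition point := (seq_sub s -> U) -> Prop.

Definition in_orbit_closure (psi phi : point) :=
  forall F : seq (seq_sub s -> U), (forall f, List.In f F -> Hemb f) ->
  exists g, aut M g /\ forall f, List.In f F -> (phi f <-> psi (g \o f)).

Definition minimal_set (S : point) :=
  forall psi phi, in_orbit_closure S psi -> in_orbit_closure S phi ->
  in_orbit_closure psi phi.

End Flow.

(* Membership in an orbit closure is decided on finite sets t of points: phi is in
   the closure of the orbit of psi iff for every t some automorphism g makes phi f
   and psi (g o f) agree on the embeddings f with image in t.

   If S = H_m(E, K'), a point phi of the orbit closure of S is, on t, a translate of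
   S, coloured by a finite piece D of K'.  The expansion property gives B in K all
   of whose expansions contain D; the expansion of a copy of B seen by the translate
   of S approximating psi is one of them, and ultrahomogeneity turns the embedding of
   D into an automorphism.  Hence S is minimal.

   Conversely, fix K0 in X_{K*}.  The Ramsey property of K*, applied to the finitely
   many expansions of A_m at once, and ultrahomogeneity give on each t a translate of
   S that coincides with some H_m(E, K0); as E matters only on those finitely many
   expansions, one E serves every t, so H_m(E, K0) is in the orbit closure of S.  By
   minimality S is in the orbit closure of H_m(E, K0), and a König argument along the
   exhaustion shows that the sets in that closure are of the form H_m(E, K'). *)

From mathcomp Require Import all_boot boolp.
Set Implicit Arguments. Unset Strict Implicit. Unset Printing Implicit Defensive.

Section Structures.
Variables (L : Type) (ar : L -> nat).

Lemma struc_ext (T : Type) (C D : struc ar T) :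
  (forall s x, rel C s x = rel D s x) -> C = D.
Proof.
case: C => c; case: D => d eq_cd; congr Struc.
by apply: functional_extensionality_dep => s; apply: funext => x; apply: eq_cd.
Qed.

Lemma map_tuple_comp (T1 T2 T3 : Type) n (f : T1 -> T2) (g : T2 -> T3) (x : n.-tuple T1) :
  map_tuple (g \o f) x = map_tuple g (map_tuple f x).
Proof. by apply: val_inj; rewrite /= map_comp. Qed.

Lemma pullback_comp (T1 T2 T3 : Type) (C : struc ar T3) (g : T2 -> T3) (f : T1 -> T2) :
  pullback C (g \o f) = pullback (pullback C g) f.
Proof. by apply: struc_ext => s x /=; rewrite map_tuple_comp. Qed.

Lemma eq_pullback (T1 T2 : Type) (C : struc ar T2) (f g : T1 -> T2) :
  f =1 g -> pullback C f = pullback C g.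
Proof. by move=> eq_fg; rewrite (funext eq_fg). Qed.

Lemma emb_comp (T1 T2 T3 : Type) (A : struc ar T1) (B : struc ar T2) (C : struc ar T3) f g :
  emb A B f -> emb B C g -> emb A C (g \o f).
Proof.
move=> [inj_f Rf] [inj_g Rg]; split; first exact: inj_comp.
by move=> s x; rewrite map_tuple_comp Rg Rf.
Qed.

Lemma emb_id (T : Type) (A : struc ar T) : emb A A id.
Proof. by split=> // s x; congr (rel A s); apply: val_inj; apply: map_id. Qed.

Lemma emb_pullback (T1 T2 : Type) (C : struc ar T2) (f : T1 -> T2) :
  injective f -> emb (pullback C f) C f.
Proof. by []. Qed.

Lemma emb_pullbackE (T1 T2 : Type) (A : struc ar T1) (B : struc ar T2) f :
  emb A B f -> pullback B f = A.
Proof. by case=> _ Rf; apply: struc_ext => s x /=; rewrite Rf. Qed.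

Lemma aut_emb (T : Type) (M : struc ar T) g : aut M g -> emb M M g.
Proof. by case. Qed.

Lemma emb_val (U : countType) (M : struc ar U) (s : seq U) : emb (induced M s) M val.
Proof. by split=> //; apply: val_inj. Qed.

Definition corestr (T : Type) (U : eqType) (t : seq U) (f : T -> U)
  (ft : forall x, f x \in t) (x : T) : seq_sub t := SeqSub (ft x).

Lemma emb_corestr (T : Type) (U : countType) (A : struc ar T) (M : struc ar U)
  (t : seq U) f (ft : forall x, f x \in t) :
  emb A M f -> emb A (induced M t) (corestr ft).
Proof.
case=> inj_f Rf; split=> [x y eq_xy|s x]; first exact/inj_f/(congr1 val eq_xy).
by rewrite /= -map_tuple_comp -Rf.
Qed.

Lemma tuple_in_seq (U : eqType) (t : seq U) n (x : n.-tuple U) :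
  all (mem t) x -> exists y : n.-tuple (seq_sub t), map_tuple val y = x.
Proof.
move=> xt; have [y yE] : exists y : seq (seq_sub t), map val y = x.
  elim: (tval x) xt => [|u s IHs] /=; first by exists [::].
  by case/andP=> tu /IHs [y <-]; exists (SeqSub tu :: y).
have size_y : size y == n by rewrite -(size_map val) yE size_tuple.
by exists (Tuple size_y); apply: val_inj.
Qed.
End Structures.

Section Induced.
Variables (L : Type) (ar : L -> nat) (U : countType).
Implicit Types (C D : struc ar U) (s t : seq U).

Lemma induced_corestr (T : Type) C t (f : T -> U) (ft : forall x, f x \in t) :
  pullback C f = pullback (induced C t) (corestr ft).
Proof. by rewrite /induced -pullback_comp. Qed.

Lemma induced_sub C D s t : {subset s <= t} ->
  induced C t = induced D t -> induced C s = induced D s.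
Proof.
move=> st eqCt; pose vt (x : seq_sub s) := st _ (valP x).
by rewrite /induced [LHS](induced_corestr C vt) [RHS](induced_corestr D vt) eqCt.
Qed.

Lemma induced_rel C D t sy (x : (ar sy).-tuple U) :
  induced C t = induced D t -> all (mem t) x -> rel C sy x = rel D sy x.
Proof. by move=> eqCt /tuple_in_seq [y <-]; rewrite -[LHS]/(rel (induced C t) sy y) eqCt. Qed.

Definition extend t (B : struc ar (seq_sub t)) : struc ar U :=
  Struc (fun sy x => `[< exists2 y, map_tuple val y = x & rel B sy y >]).

Lemma induced_extend t (B : struc ar (seq_sub t)) : induced (extend B) t = B.
Proof.
apply: struc_ext => sy y /=; apply/asboolP/idP => [[y' /(congr1 val) /= eq_y' Dy']|Dy].
  by have /val_inj <- : tval y' = tval y := inj_map val_inj eq_y'.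
by exists y.
Qed.
End Induced.

Section Expansions.
Variables (L L' : Type) (ar : L -> nat) (ar' : L' -> nat) (Ks : cls (sum_ar ar ar')).
Hypothesis Ks_hereditary : hereditary Ks.

Lemma reduct_emb (T1 T2 : Type) (As : struc (sum_ar ar ar') T1) (Bs : struc (sum_ar ar ar') T2)
  (A : struc ar T1) (B : struc ar T2) f :
  is_expansion As A -> is_expansion Bs B -> emb As Bs f -> emb A B f.
Proof. by move=> expA expB [inj_f Rf]; split=> // s x; rewrite -expB Rf expA. Qed.

Lemma expansion_pullback (T1 T2 : Type) (Bs : struc (sum_ar ar ar') T2)
  (A : struc ar T1) (B : struc ar T2) f :
  is_expansion Bs B -> emb A B f -> is_expansion (pullback Bs f) A.
Proof. by move=> expB [_ Rf] s x /=; rewrite expB Rf. Qed.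

Lemma Kstar_pullback_emb (T1 T2 : finType) (A : struc ar T1) (B : struc ar T2) Bs f :
  Kstar Ks B Bs -> emb A B f -> Kstar Ks A (pullback Bs f).
Proof.
move=> [KBs expB] Af; split; last exact: expansion_pullback expB Af.
exact: Ks_hereditary (emb_pullback _ Af.1) KBs.
Qed.

Lemma Kstar_pullback (U : countType) (M : struc ar U) K0 (T : finType) (B : struc ar T) e :
  X_Kstar Ks M K0 -> emb B M e -> Kstar Ks B (pullback K0 e).
Proof.
move=> [expK0 KsK0] Be; split; last exact: expansion_pullback expK0 Be.
rewrite (induced_corestr K0 (codom_f e)).
exact: Ks_hereditary (emb_pullback _ (emb_corestr _ (emb_pullback K0 Be.1)).1) (KsK0 _).
Qed.
End Expansions.

(* König's lemma for the finitely branching tree whose level-n nodes are the values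
   res n C of the C satisfying P n. *)
Section Koenig.
Variables (T : Type) (R : nat -> Type) (res : forall n, T -> R n) (P : nat -> T -> Prop).
Hypothesis P_res : forall n C D, res n C = res n D -> P n C -> P n D.
Hypothesis P_pred : forall n C, P n.+1 C -> P n C.
Hypothesis P_finite : forall n, exists l : seq (R n), forall C, P n C -> List.In (res n C) l.
Hypothesis P_ex : forall n, exists C, P n C.

Let extendable n C := forall k, exists2 D, P (n + k) D & res n D = res n C.

Let P_le n k C : P (n + k) C -> P n C.
Proof. by elim: k => [|k IHk]; rewrite ?addn0 // addnS => /P_pred. Qed.

Let extendable_choice n (Q : T -> Prop) :
  (forall k, exists2 C, P (n + k) C & Q C) -> exists2 C, Q C & extendable n C.
Proof.
move=> QP; have [//|no_ext] := pselect (exists2 C, Q C & extendable n C).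
have [l lP] := P_finite n.
pose avoided D k := forall C, P (n + k) C -> Q C -> res n C <> D.
have /choice [kD kDP] : forall D, exists k, avoided D k.
  move=> D; have [[C QC eqCD]|] := pselect (exists2 C, Q C & res n C = D); last first.
    by move=> noC; exists 0 => C _ QC eqCD; apply: noC; exists C.
  have /existsNP [k Ck] : ~ extendable n C by move=> extC; apply: no_ext; exists C.
  by exists k => C' PC' QC' eqC'D; apply: Ck; exists C' => //; rewrite eqC'D.
have [k kP] : exists k, forall D, List.In D l -> kD D <= k.
  elim: l {lP} => [|D l [k kP]]; first by exists 0.
  exists (maxn (kD D) k) => D' /= [<-|/kP le_k]; first exact: leq_maxl.
  exact: leq_trans le_k (leq_maxr _ _).
have [C PC QC] := QP k.
have lC := lP C (P_le PC).
case: (kDP (res n C) C _ QC erefl); move: PC; rewrite -(subnKC (kP _ lC)) addnA.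
exact: P_le.
Qed.

Lemma koenig : exists c : nat -> T, forall n, P n (c n) /\ res n (c n.+1) = res n (c n).
Proof.
have [C0 _ extC0] := @extendable_choice 0 (fun _ => True) (fun k =>
  let: ex_intro C PC := P_ex k in ex_intro2 _ _ C PC I).
have next_ext n C : extendable n C -> exists2 D, extendable n.+1 D & res n D = res n C.
  move=> extC; have [k|D eqDC extD] := @extendable_choice n.+1 (fun D => res n D = res n C).
    by have [D PD eqDC] := extC k.+1; exists D; rewrite // addSnnS.
  by exists D.
have /choice [next nextP] : forall nC : nat * T, exists D,
    extendable nC.1 nC.2 -> extendable nC.1.+1 D /\ res nC.1 D = res nC.1 nC.2.
  case=> n C; have [/next_ext [D extD eqDC]|not_extC] := pselect (extendable n C).
    by exists D.
  by exists C => /not_extC.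
pose c := fix c n := if n is n'.+1 then next (n', c n') else C0.
have ext_c n : extendable n (c n) by elim: n => [|n /(nextP (n, _)) []].
exists c => n; split; last exact: (nextP (n, c n) (ext_c n)).2.
by have [D PD eqDC] := ext_c n 0; apply: P_res eqDC _; rewrite -[n]addn0.
Qed.
End Koenig.

Lemma finite_pigeonhole (I : finType) (V : eqType) (G : I -> seq V -> Prop) :
  (forall p t t', {subset t' <= t} -> G p t -> G p t') ->
  (forall t, exists p, G p t) -> exists p, forall t, G p t.
Proof.
move=> G_sub G_ex; have [//|no_p] := pselect (exists p, forall t, G p t).
have /choice [bad badP] : forall p, exists t, ~ G p t.
  by move=> p; apply/existsNP => Gp; apply: no_p; exists p.
have [p Gp] := G_ex (flatten [seq bad q | q <- enum I]).
case: (badP p); apply: G_sub Gp => x xp.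
by apply/flatten_mapP; exists p; rewrite ?mem_enum.
Qed.

Section RamseyList.
Variables (L : Type) (ar : L -> nat).
(* A class must take its carrier explicitly, as in [Ks TB B]. *)
Unset Implicit Arguments.
Variable Ks : cls ar.
Set Implicit Arguments.
Hypothesis Ks_ramsey : ramsey Ks.

Lemma ramsey_list (TA : finType) (l : seq (struc ar TA)) (TB : finType) (B : struc ar TB) :
  Ks TB B -> exists (TC : finType) (C : struc ar TC), Ks TC C /\
    forall c : (TA -> TC) -> bool, exists h, emb B C h /\
      forall a, List.In a l -> Ks TA a -> forall f g, emb a B f -> emb a B g ->
        c (h \o f) = c (h \o g).
Proof.
move=> KB; elim: l => [|a l [TC [C [KC IHc]]]].
  by exists TB, B; split=> // c; exists id; split=> //; exact: emb_id.
have [[Ka [e Ce]]|not_aC] := pselect (Ks TA a /\ exists e, emb a C e); last first.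
  exists TC, C; split=> // c; have [h [Ch hP]] := IHc c; exists h; split=> //.
  move=> a' /= [<-|/hP //] Ka f g Bf _; case: not_aC; split=> //.
  by exists (h \o f); apply: emb_comp Bf Ch.
have [TD [D [KD _ DP]]] := Ks_ramsey Ka KC (ex_intro _ e Ce) (leqnn 2).
exists TD, D; split=> // c.
have [h1 [Dh1 h1P]] := DP (fun phi => if c phi then ord0 else ord_max).
have [h0 [Ch0 h0P]] := IHc (fun phi => c (h1 \o phi)).
exists (h1 \o h0); split; first exact: emb_comp Ch0 Dh1.
move=> a' /= [<-|/h0P //] Ka' f g Bf Bg.
move: (h1P _ _ (emb_comp Bf Ch0) (emb_comp Bg Ch0)) => /=.
by case: (c _); case: (c _).
Qed.
End RamseyList.

Lemma In_mem (T : eqType) (x : T) (r : seq T) : x \in r -> List.In x r.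
Proof. by elim: r => //= y r IHr; rewrite in_cons => /predU1P [->|/IHr]; [left | right]. Qed.

Section OrbitClosure.
Variables (L : Type) (ar : L -> nat) (U : countType) (M : struc ar U) (s : seq U).
Implicit Types (psi phi : point s).

Lemma aut_id : aut M id.
Proof. by split; [exists id | exact: emb_id]. Qed.

Lemma in_orbit_closure_refl psi : in_orbit_closure M psi psi.
Proof. by move=> F _; exists id; split=> //; exact: aut_id. Qed.

Definition maps_into (t : seq U) : seq (seq_sub s -> U) :=
  [seq fun x => val (ff x) | ff : {ffun seq_sub s -> seq_sub t} <- enum [set: _]].

Lemma maps_intoP t (f : seq_sub s -> U) : (forall x, f x \in t) -> List.In f (maps_into t).
Proof.
move=> ft; have -> : f = fun x => val ([ffun x => corestr ft x] x).
  by apply: funext => x; rewrite ffunE.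
by apply: List.in_map; apply: In_mem; rewrite mem_enum in_setT.
Qed.

Lemma in_orbit_closureP psi phi : in_orbit_closure M psi phi <->
  forall t : seq U, exists g, aut M g /\
    forall f, Hemb M f -> (forall x, f x \in t) -> (phi f <-> psi (g \o f)).
Proof.
split=> [cl t | cl F HF].
  have [|g [Mg gP]] := cl [seq f <- maps_into t | `[< Hemb M f >]].
    by move=> f /List.filter_In [_ /asboolP].
  exists g; split=> // f Hf ft; apply: gP; apply/List.filter_In.
  by split; [exact: maps_intoP | exact/asboolP].
have imgsP f x : List.In f F -> f x \in flatten [seq codom f | f <- F].
  elim: F {HF} => //= f' F IHF [<-|/IHF]; rewrite mem_cat ?codom_f // => ->.
  by rewrite orbT.
have [g [Mg gP]] := cl (flatten [seq codom f | f <- F]).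
by exists g; split=> // f Ff; apply: gP => [|x]; [exact: HF | exact: imgsP].
Qed.
End OrbitClosure.

Section Exhaustion.
Variables (L : Type) (ar : L -> nat) (U : countType) (A : nat -> seq U).
Hypothesis A_exhaustion : exhaustion A.

Lemma exhaustion_mono m n : m <= n -> {subset A m <= A n}.
Proof.
move/subnK <-; elim: (n - m) => [|k IHk] x Amx; first by rewrite add0n.
by rewrite addSn; apply: A_exhaustion.1; apply: IHk.
Qed.

Lemma exhaustion_seq (t : seq U) : exists n, {subset t <= A n}.
Proof.
elim: t => [|u t [n tn]]; first by exists 0.
have [k uk] := A_exhaustion.2 u; exists (maxn n k) => x; rewrite in_cons.
case/predU1P => [->|/tn]; first exact: exhaustion_mono (leq_maxr n k) _ uk.
exact: exhaustion_mono (leq_maxl n k) _.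
Qed.

Lemma glue (c : nat -> struc ar U) :
  (forall n, induced (c n.+1) (A n) = induced (c n) (A n)) ->
  exists C, forall n, induced C (A n) = induced (c n) (A n).
Proof.
move=> c_coh; have coh m n : m <= n -> induced (c n) (A m) = induced (c m) (A m).
  move/subnK <-; elim: (n - m) => [|k IHk] //; rewrite addSn -IHk.
  exact: induced_sub (exhaustion_mono (leq_addl k m)) (c_coh _).
have /choice [lev levP] := exhaustion_seq.
exists (Struc (fun sy x => rel (c (lev x)) sy x)) => n.
apply: struc_ext => sy y /=; set x := map_tuple val y.
have xn : all (mem (A n)) x by apply/allP => _ /mapP [z _ ->]; apply: valP.
have xlev : all (mem (A (lev x))) x by apply/allP => z /levP.
rewrite -(induced_rel (coh _ _ (leq_maxr n (lev x))) xlev).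
exact: induced_rel (coh _ _ (leq_maxl n (lev x))) xn.
Qed.
End Exhaustion.

Section Flow.
Variables (L L' : Type) (ar : L -> nat) (ar' : L' -> nat).
Unset Implicit Arguments.
Variables (K : cls ar) (Ks : cls (sum_ar ar ar')).
Set Implicit Arguments.
Variables (U : countType) (M : struc ar U).
Hypotheses (M_limit : fraisse_limit K M) (Ks_excellent : excellent K Ks).
Local Notation sar := (sum_ar ar ar').
Local Notation X := (X_Kstar Ks M).

Let Ks_hereditary : hereditary Ks.
Proof. by case: Ks_excellent => [[]]. Qed.

Definition Hset (s : seq U) (K' : struc sar U) (E : struc sar (seq_sub s) -> Prop) : point s :=
  fun f => Hemb M f /\ E (pullback K' f).

Lemma induced_age (s : seq U) : K _ (induced M s).
Proof. by apply/(M_limit.1 _ _); exists val; apply: emb_val. Qed.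

Lemma X_universal K0 (T : finType) (C : struc sar T) : X K0 -> Ks T C -> exists j, emb C K0 j.
Proof.
move=> XK0 KC; have [_ _ _ Ks_ep _] := Ks_excellent.
have [TB [B [KB BP]]] := Ks_ep _ _ KC.
have [e Be] := (M_limit.1 _ B).1 KB.
have [f Cf] := BP _ (Kstar_pullback Ks_hereditary XK0 Be).
by exists (e \o f); apply: emb_comp Cf (emb_pullback _ Be.1).
Qed.

Lemma ramsey_coloring (s : seq U) (S : point s) K0 (t : seq U) : X K0 ->
  exists g, aut M g /\ exists E : struc sar (seq_sub s) -> Prop,
    forall f, Hemb M f -> (forall x, f x \in t) -> (S (g \o f) <-> E (pullback K0 f)).
Proof.
move=> XK0; have [_ Ks_pc _ _ Ks_ramsey] := Ks_excellent.
have [l lP] := Ks_pc _ _ (induced_age s).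
have [TC [C [KC CP]]] := ramsey_list Ks_ramsey l (XK0.2 t).
have [j Cj] := X_universal XK0 KC.
have [h [th hP]] := CP (fun phi => `[< S (j \o phi) >]).
have Mjh : emb (induced M t) M (j \o h).
  exact: reduct_emb (expansion_pullback XK0.1 (emb_val M t)) XK0.1 (emb_comp th Cj).
have [g [Mg gE]] := M_limit.2 _ _ _ _ (emb_val M t) Mjh.
exists g; split=> //.
exists (fun a => exists2 f', emb a (induced K0 t) f' & S (j \o h \o f')).
move=> f Hf ft; have -> : g \o f = j \o h \o corestr ft.
  by apply: funext => x; exact: gE (corestr ft x).
have tf := emb_corestr ft (emb_pullback K0 Hf.1).
split=> [|[f' tf' Sf']]; first by exists (corestr ft).
have Ka := Kstar_pullback Ks_hereditary XK0 Hf.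
have /= c_eq := hP _ (lP _ Ka) Ka.1 _ _ tf' tf.
by apply/asboolP; rewrite -c_eq; apply/asboolP.
Qed.

Lemma Hset_in_orbit_closure (s : seq U) (S : point s) K0 : X K0 ->
  exists2 E, (forall a, E a -> Kstar Ks (induced M s) a) & in_orbit_closure M S (Hset K0 E).
Proof.
move=> XK0; have [_ Ks_pc _ _ _] := Ks_excellent.
have [l lP] := Ks_pc _ _ (induced_age s).
(* Through the finite list l, a colouring of the expansions of A_m is a subset of
   indices; this makes the pigeonhole principle applicable. *)
pose typed (p : {set 'I_(size l)}) a :=
  exists2 i : 'I_(size l), i \in p & List.nth i l (induced K0 s) = a.
have [p pP] : exists p, forall t : seq U, exists g, aut M g /\ forall f, Hemb M f ->
    (forall x, f x \in t) -> (S (g \o f) <-> typed p (pullback K0 f)).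
  apply: finite_pigeonhole => [p t t' t't [g [Mg gP]] | t].
    by exists g; split=> // f Hf ft; apply: gP => // x; apply: t't.
  have [g [Mg [E EP]]] := ramsey_coloring S t XK0.
  exists [set i : 'I_(size l) | `[< E (List.nth i l (induced K0 s)) >]], g; split=> // f Hf ft.
  rewrite EP //; have Ka := Kstar_pullback Ks_hereditary XK0 Hf.
  have [i [/ltP il <-]] := List.In_nth _ _ (induced K0 s) (lP _ Ka).
  split=> [Ei | [j]]; first by exists (Ordinal il); rewrite // inE; apply/asboolP.
  by rewrite inE => /asboolP ? <-.
exists (fun a => Kstar Ks (induced M s) a /\ typed p a) => [a []//|].
apply/in_orbit_closureP => t; have [g [Mg gP]] := pP t.
exists g; split=> // f Hf ft; rewrite gP //.
split=> [[_ []]|pf] //; do 2!split=> //.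
exact (Kstar_pullback Ks_hereditary XK0 Hf).
Qed.

Lemma Hset_minimal (s : seq U) K' (E : struc sar (seq_sub s) -> Prop) :
  X K' -> minimal_set M (Hset K' E).
Proof.
move=> XK' psi phi /in_orbit_closureP cl_psi /in_orbit_closureP cl_phi.
apply/in_orbit_closureP => t; have [g1 [Mg1 g1P]] := cl_phi t.
have [_ _ _ Ks_ep _] := Ks_excellent.
have [TB [B [KB BP]]] := Ks_ep _ _ (XK'.2 [seq g1 x | x <- t]).
have [e Be] := (M_limit.1 _ B).1 KB.
have [g2 [Mg2 g2P]] := cl_psi (codom e).
have KBs := Kstar_pullback Ks_hereditary XK' (emb_comp Be (aut_emb Mg2)).
have [h Dh] := BP _ KBs.
have g1t (x : seq_sub t) : g1 (val x) \in [seq g1 x | x <- t] := map_f g1 (valP x).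
have Mg1t := emb_corestr g1t (emb_comp (emb_val M t) (aut_emb Mg1)).
have Bh := reduct_emb (expansion_pullback XK'.1 (emb_val M _)) KBs.2 Dh.
have [g [Mg gE]] := M_limit.2 _ _ _ _ (emb_val M t) (emb_comp (emb_comp Mg1t Bh) Be).
exists g; split=> // f Hf ft.
have gf x : g (f x) = e (h (corestr g1t (corestr ft x))) := gE (corestr ft x).
have Hgf : Hemb M (g \o f) := emb_comp Hf (aut_emb Mg).
rewrite (g1P f Hf ft) (g2P _ Hgf); last by move=> x /=; rewrite gf codom_f.
(* g \o f factors through h, which pulls the colouring of B back to that of g1 t. *)
rewrite /Hset; have -> : pullback K' (g2 \o (g \o f)) = pullback K' (g1 \o f).
  transitivity (pullback (pullback (pullback K' (g2 \o e)) h) (corestr g1t \o corestr ft)).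
    by rewrite -!pullback_comp; apply: eq_pullback => x /=; rewrite gf.
  by rewrite (emb_pullbackE Dh) /induced -pullback_comp.
split=> -[_ Ef]; split=> //; first exact: emb_comp Hgf (aut_emb Mg2).
exact: emb_comp Hf (aut_emb Mg1).
Qed.

Section Compactness.
Variable A : nat -> seq U.
Hypothesis A_exhaustion : exhaustion A.

Lemma Kstar_induced_sub C s t : {subset s <= t} ->
  Kstar Ks (induced M t) (induced C t) -> Kstar Ks (induced M s) (induced C s).
Proof.
move=> st KCt; pose vt (x : seq_sub s) := st _ (valP x).
rewrite [induced C s](induced_corestr C vt).
exact (Kstar_pullback_emb Ks_hereditary KCt (emb_corestr vt (emb_val M s))).
Qed.

Lemma compactness (Q : nat -> struc sar U -> Prop) :
  (forall n C D, induced C (A n) = induced D (A n) -> Q n C -> Q n D) ->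
  (forall n C, Q n.+1 C -> Q n C) ->
  (forall n, exists C, Kstar Ks (induced M (A n)) (induced C (A n)) /\ Q n C) ->
  exists2 K', X K' & forall n, Q n K'.
Proof.
move=> Q_res Q_pred Q_ex; have [_ Ks_pc _ _ _] := Ks_excellent.
pose P n C := Kstar Ks (induced M (A n)) (induced C (A n)) /\ Q n C.
have P_res n C D : induced C (A n) = induced D (A n) -> P n C -> P n D.
  by move=> eqCD [KC QC]; split; [rewrite -eqCD | exact: Q_res QC].
have P_pred n C : P n.+1 C -> P n C.
  by case=> KC QC; split; [exact: Kstar_induced_sub (A_exhaustion.1 n) KC | exact: Q_pred].
have P_finite n : exists l, forall C, P n C -> List.In (induced C (A n)) l.
  by have [l lP] := Ks_pc _ _ (induced_age (A n)); exists l => C [/lP].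
have [c cP] := @koenig _ _ (fun n C => induced C (A n)) P P_res P_pred P_finite Q_ex.
have [C CE] := glue A_exhaustion (fun n => (cP n).2).
have PC n : P n C := P_res n _ _ (esym (CE n)) (cP n).1.
exists C => [|n]; last exact: (PC n).2.
split=> [sy x | s].
  have [n xn] := exhaustion_seq A_exhaustion x.
  have /tuple_in_seq [y <-] : all (mem (A n)) x by apply/allP.
  exact: (PC n).1.2.
have [n sn] := exhaustion_seq A_exhaustion s.
exact: (Kstar_induced_sub sn (PC n).1).1.
Qed.

Lemma X_nonempty : expansion_of K Ks -> exists K0, X K0.
Proof.
move=> Ks_expansion.
have [n|K0 XK0 _] := @compactness (fun _ _ => True) (fun _ _ _ _ _ => I) (fun _ _ _ => I).
  have [B KB] := (Ks_expansion.2 _ _).1 (induced_age (A n)).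
  by exists (extend B); rewrite induced_extend.
by exists K0.
Qed.

Lemma orbit_closure_Hset (s : seq U) K0 (E : struc sar (seq_sub s) -> Prop) (S : point s) :
  X K0 -> (forall f, S f -> Hemb M f) -> in_orbit_closure M (Hset K0 E) S ->
  exists2 K', X K' & forall f, S f <-> Hset K' E f.
Proof.
move=> XK0 SH /in_orbit_closureP cl.
pose Q n C := forall f, Hemb M f -> (forall x, f x \in A n) -> (S f <-> E (pullback C f)).
have Q_res n C D : induced C (A n) = induced D (A n) -> Q n C -> Q n D.
  move=> eqCD QC f Hf fn; rewrite QC //.
  by rewrite (induced_corestr C fn) (induced_corestr D fn) eqCD.
have Q_pred n C : Q n.+1 C -> Q n C.
  by move=> QC f Hf fn; apply: QC => // x; apply: A_exhaustion.1.
have [n|K' XK' QK'] := @compactness Q Q_res Q_pred.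
  have [g [Mg gP]] := cl (A n); exists (pullback K0 g); split.
    rewrite /induced -pullback_comp.
    exact (Kstar_pullback Ks_hereditary XK0 (emb_comp (emb_val M _) (aut_emb Mg))).
  move=> f Hf fn; rewrite gP // -pullback_comp.
  by split=> [[]//|Ef]; split=> //; apply: emb_comp Hf (aut_emb Mg).
exists K' => // f; have [n fn] := exhaustion_seq A_exhaustion (codom f).
have fAn x : f x \in A n := fn _ (codom_f f x).
split=> [Sf | [Hf Ef]]; last exact/(QK' n f Hf fAn).
by split; [exact: SH | apply/(QK' n f (SH f Sf) fAn)].
Qed.
End Compactness.
End Flow.

Theorem mainTheorem5 (L L' : Type) (ar : L -> nat) (ar' : L' -> nat)
  (K : cls ar) (Ks : cls (sum_ar ar ar'))
  (U : countType) (M : struc ar U) (A : nat -> seq U)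
  (HK : fraisse_class K) (Hlim : fraisse_limit K M) (HA : exhaustion A)
  (Hexp : expansion_of K Ks) (Hexc : excellent K Ks)
  (m : nat) (S : (seq_sub (A m) -> U) -> Prop)
  (HS : forall f, S f -> Hemb M f) :
  minimal_set M S <->
  exists K' : struc (sum_ar ar ar') U, X_Kstar Ks M K' /\
  exists E : struc (sum_ar ar ar') (seq_sub (A m)) -> Prop,
    (forall As, E As -> Kstar Ks (induced M (A m)) As) /\
    (forall f, S f <-> (Hemb M f /\ E (pullback K' f))).
Proof.
split=> [S_min | [K' [XK' [E [_ SE]]]]]; last first.
  have -> : S = Hset M K' E by apply: funext => f; apply: propext.
  exact (Hset_minimal Hlim Hexc XK').
have [K0 XK0] := X_nonempty Hlim Hexc HA Hexp.
have [E EK SE] := Hset_in_orbit_closure Hlim Hexc S XK0.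
have S_in := S_min _ _ SE (in_orbit_closure_refl S).
have [K' XK' SK'] := orbit_closure_Hset Hlim Hexc HA XK0 HS S_in.
by exists K'; split=> //; exists E.
Qed.
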